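(* Consider the decentralized secure pliable index coding problem with $m$ users, $m$ messages and $s$-circular-shift side information sets, as defined in the context, and restrict all encoding functions to be linear. In each of the following cases there is no (linear) scheme that satisfies all users while meeting the individual security constraint: (1) $s=1$ and $m\geq 3$; (2) $s=2$ and $m\geq 5$; (3) $s=3$ and $m$ odd; (4) $s=m-2$ and $m$ odd.
   Context: Decentralized secure PICOD with circular shift side information. Fix integers $m\ge 2$ and $s\in[m-1]$ (where $[a]=\{1,\dots,a\}$). There are $m$ users $u_1,\dots,u_m$, no central transmitter, and $m$ independent messages $w_1,\dots,w_m$, each consisting of $\kappa\in\mathbb{N}$ independent uniformly distributed bits (for linear schemes, symbols of a finite field). User $u_i$ knows the messages $W_{A_i}=\{w_a: a\in A_i\}$ with $A_i=\{i,i+1,\dots,i+s-1\}$, indices taken modulo $m$ (in $[m]$); the collection of all $A_i$ is known to everyone. Users communicate over a shared noiseless broadcast channel, one at a time: user $u_j$ sends a codeword $x_j=\mathsf{ENC}_j(W_{A_j})$ of length $\ell_j\kappa$, and the total code-length is $\ell=\sum_j \ell_j$; let $x$ denote all transmitted codewords. Each user $u_j$ decodes $\widehat w_j=\mathsf{DEC}_j(W_{A_j},x)$; user $u_j$ is satisfied if $\widehat w_j=w_{d_j}$ for some $d_j\in[m]\setminus A_j$ (any message outside its side information). Individual security requires that for every user $u_j$, $I(W_i; x\mid W_{A_j})=0$ for all $i\in[m]\setminus(\{d_j\}\cup A_j)$, i.e., user $u_j$ obtains no information about any message outside its side information other than its decoded one. A scheme is feasible if all users are satisfied and the security constraint holds;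 $\kappa$ may be taken arbitrarily large. Linear encoding means each $\mathsf{ENC}_j$ is a linear map. *)

From HB Require Import structures.
From mathcomp Require Import all_boot all_order all_algebra all_field.
Set Implicit Arguments. Unset Strict Implicit. Unset Printing Implicit Defensive.
Import GRing.Theory.
Local Open Scope ring_scope.

(* Users and messages are indexed by 'I_m (0-based).  The side information of
   user i is the circular window A_i = {i, i+1, ..., i+s-1} (mod m). *)
Definition side (m s : nat) (i : 'I_m) : {set 'I_m} :=
  [set j : 'I_m | ((j + m - i) %% m < s)%N].

(* The message matrix W : 'M[F]_(m, k): row a is message w_a (k symbols of F).
   proj A W keeps exactly the messages indexed by A (i.e. W_A) and zeroes the rest. *)
Definition proj (F : fieldType) (m k : nat) (A : {set 'I_m}) (W : 'M[F]_(m, k))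
  : 'M[F]_(m, k) := \matrix_(i, c) (if i \in A then W i c else 0).

(* Linear decentralized scheme: user j sends x_j = vec(W_{A_j}) * E_j, a codeword
   of length n j (an arbitrary length, covering l_j * kappa). *)
Definition codeword (F : fieldType) (m k : nat) (n : 'I_m -> nat)
  (E : forall j : 'I_m, 'M[F]_(m * k, n j)) (A : 'I_m -> {set 'I_m})
  (W : 'M[F]_(m, k)) : forall j : 'I_m, 'rV[F]_(n j) :=
  fun j => mxvec (proj (A j) W) *m E j.

Definition cw_eq (F : fieldType) (m : nat) (n : 'I_m -> nat)
  (x y : forall j : 'I_m, 'rV[F]_(n j)) : bool := [forall j, x j == y j].

(* Security I(W_i ; x | W_{A_j}) = 0 is written out as conditional
   independence under the uniform distribution:
   for all values a of W_{A_j} (given by W0), v of w_i and y of x,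
     P(W_i = v, x = y | W_A = a) = P(W_i = v | W_A = a) * P(x = y | W_A = a),
   with P(W_i = v | W_A = a) = 1 / #|F^k|, cleared of denominators. *)
Definition feasible_linear (F : finFieldType) (m s k : nat) : Prop :=
  exists (n : 'I_m -> nat) (E : forall j : 'I_m, 'M[F]_(m * k, n j))
         (d : 'I_m -> 'I_m)
         (DEC : 'I_m -> 'M[F]_(m, k) -> (forall j : 'I_m, 'rV[F]_(n j)) -> 'rV[F]_k),
    let x := codeword E (side s) in
    (forall j, d j \notin side s j) /\
    (forall j (W : 'M[F]_(m, k)), DEC j (proj (side s j) W) (x W) = row (d j) W) /\
    (forall (j i : 'I_m), i \notin side s j -> i != d j ->
       forall (W0 : 'M[F]_(m, k)) (v : 'rV[F]_k) (y : forall j : 'I_m, 'rV[F]_(n j)),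
         (#|[set W : 'M[F]_(m, k) | (proj (side s j) W == proj (side s j) W0)
                                    && (row i W == v) && cw_eq (x W) y]|
            * #|{: 'rV[F]_k}|)%N
         = #|[set W : 'M[F]_(m, k) | (proj (side s j) W == proj (side s j) W0)
                                    && cw_eq (x W) y]|).

(* Work with the "silent" message matrices W, those whose transmissions all
   vanish.  Decodability: a silent W vanishing on A_j vanishes at d_j.
   Security: for i outside A_j and i <> d_j, row i of such a W is arbitrary.
   Hence a user whose window lies in A_j plus i ignores message i, and comparing
   neighbours gives d_j = j + s <-> d_{j+1} = j.  If every user ignores the part
   of its window on one side of a set B, projecting onto B keeps W silent; with
   d_j in B and B disjoint from A_j, w_{d_j} becomes a function of the
   transmissions, so every user missing it must decode it, which is impossible
   for two distinct such messages when 2s < m.  For s <= 2 every user ignores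
   one of its messages, so all decoded messages are of this kind.  For s = m - 2
   the decoded messages alternate between j + s and j - 1 around an odd cycle.
   For s = 3 the alternation breaks somewhere; a cut along an arc makes the
   decoded message there a function of the transmissions, and the neighbour
   rules produce a second one. *)

From HB Require Import structures.
From mathcomp Require Import all_boot all_order all_algebra all_field.
From mathcomp Require Import zify ring.
From Stdlib Require Import FunctionalExtensionality.
Set Implicit Arguments. Unset Strict Implicit. Unset Printing Implicit Defensive.
Import GRing.Theory.
Local Open Scope ring_scope.

Section Cyclic.
Variable n : nat.
Local Notation m := n.+2.
Implicit Types (j a : 'I_m) (s t b : nat).

Definition offset j a : nat := nat_of_ord (a - j).

Lemma offset_lt j a : (offset j a < m)%N.
Proof. exact: ltn_ord. Qed.

Lemma mem_side s j a : (a \in side s j) = (offset j a < s)%N.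
Proof. by rewrite inE /offset /= modnDmr addnBA // ltnW. Qed.

Lemma addr_offset j a : j + (offset j a)%:R = a.
Proof. by rewrite natr_Zp addrC subrK. Qed.

Lemma natr_m : m%:R = 0 :> 'I_m.
Proof. by apply: val_inj; rewrite Zp_nat /= modnn. Qed.

Lemma offset_natr j b t : (b <= t < b + m)%N -> offset (j + b%:R) (j + t%:R) = (t - b)%N.
Proof.
move=> /andP[bt tb]; rewrite /offset [j + t%:R]addrC addrKA -natrB // Zp_nat /= modn_small //.
lia.
Qed.

Lemma offset_addr_natr j t : (t < m)%N -> offset j (j + t%:R) = t.
Proof. by move=> tm; have := @offset_natr j 0 t; rewrite addr0 subn0; apply. Qed.

Lemma offset_succ j t : (0 < t <= m)%N -> offset (j + 1) (j + t%:R) = t.-1.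
Proof. by move=> /andP[t0 tm]; rewrite (offset_natr j (b:=1)) ?subn1 //; lia. Qed.

Lemma offset_self j : offset j j = 0%N.
Proof. by rewrite /offset subrr. Qed.

Lemma eq_addr_natr j t t' : (t < m)%N -> (t' < m)%N ->
  (j + t%:R == j + t'%:R) = (t == t').
Proof.
move=> tm t'm; apply/eqP/eqP => [/(congr1 (offset j))|-> //].
by rewrite !offset_addr_natr.
Qed.

Lemma addr_natr_eq j t : (t < m)%N -> (j + t%:R == j) = (t == 0%N).
Proof. by move=> tm; have := eq_addr_natr j tm (ltn0Sn n.+1); rewrite addr0. Qed.

Lemma addr_natr_m j : j + m%:R = j.
Proof. by rewrite natr_m addr0. Qed.

Lemma addr_natr_mod j t : j + (t + m)%:R = j + t%:R.
Proof. by rewrite natrD natr_m addr0. Qed.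

Lemma subr1_natr j : j - 1 = j + n.+1%:R.
Proof. by apply: (addIr 1); rewrite subrK -addrA natr1 natr_m addr0. Qed.

Lemma mem_side_succ s j a : (s < m)%N ->
  (a \in side s (j + 1)) = (a != j) && ((a \in side s j) || (a == j + s%:R)).
Proof.
move=> sm; rewrite -(addr_offset j a) !mem_side; have := offset_lt j a.
case: (offset j a) => [|t] tm.
  rewrite -[X in offset _ X](addr_natr_mod j 0) add0n offset_succ ?addr0 ?eqxx /=; lia.
rewrite offset_succ ?offset_addr_natr ?addr_natr_eq ?eq_addr_natr //; lia.
Qed.

Lemma mem_side_natr s j b t : (b <= t < b + m)%N ->
  (j + t%:R \in side s (j + b%:R)) = (t - b < s)%N.
Proof. by move=> bt; rewrite mem_side offset_natr. Qed.

Lemma side_window s j a : a \in side s j -> exists2 t, (t < s)%N & a = j + t%:R.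
Proof. by rewrite mem_side => h; exists (offset j a); rewrite ?addr_offset. Qed.

Lemma side_avoiding2 s p q : (2 * s < m)%N ->
  exists i : 'I_m, (p \notin side s i) && (q \notin side s i).
Proof.
move=> sm; rewrite -(addr_offset p q); have := offset_lt p q; set c := offset p q => cm.
case: (ltnP (c + s) m) => cs; [exists (p + c.+1%:R) | exists (p + 1%:R)];
  rewrite -[X in X \notin _](addr_natr_m p).
  by rewrite -(addr_natr_mod p c) !mem_side_natr //; lia.
by rewrite !mem_side_natr //; lia.
Qed.

Definition arc j b1 b2 : {set 'I_m} := [set a | (b1 <= offset j a <= b2)%N].

Lemma mem_arc_natr j b1 b2 t : (b2 < m)%N -> (t < m + m)%N ->
  (j + t%:R \in arc j b1 b2) = (b1 <= t <= b2)%N || (b1 + m <= t <= b2 + m)%N.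
Proof.
move=> b2m tm; rewrite inE; case: (ltnP t m) => tlt.
  by rewrite offset_addr_natr //; apply/idP/idP; lia.
rewrite -[X in offset X](addr_natr_m j) offset_natr //; apply/idP/idP; lia.
Qed.

Lemma no_alternating_odd (f : 'I_m -> bool) :
  odd m -> ~ (forall j, f (j + 1) = ~~ f j).
Proof.
move=> odd_m alt; have iter t j : f (j + t%:R) = odd t (+) f j.
  elim: t => [|t IH]; first by rewrite addr0.
  by rewrite -natr1 addrA alt IH /= negb_add.
by have := iter m 0; rewrite addr_natr_m odd_m; case: (f 0).
Qed.

End Cyclic.

Section Projection.
Variables (F : fieldType) (m k : nat).
Implicit Types (A B : {set 'I_m}) (W : 'M[F]_(m, k)).

Lemma row_proj A W a : row a (proj A W) = if a \in A then row a W else 0.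
Proof. by apply/rowP => c; rewrite !mxE; case: ifP; rewrite ?mxE. Qed.

Lemma eq_proj A W W' : {in A, forall a, row a W = row a W'} -> proj A W = proj A W'.
Proof. by move=> eqW; apply/row_matrixP => a; rewrite !row_proj; case: ifP => // /eqW. Qed.

Lemma projI A B W : proj A (proj B W) = proj (A :&: B) W.
Proof. by apply/matrixP => i c; rewrite !mxE inE; case: (i \in A). Qed.

Lemma projD A W W' : proj A (W + W') = proj A W + proj A W'.
Proof. by apply/matrixP => i c; rewrite !mxE; case: ifP; rewrite ?addr0. Qed.

Lemma proj0 A : proj A (0 : 'M[F]_(m, k)) = 0.
Proof. by apply/matrixP => i c; rewrite !mxE if_same. Qed.

Lemma proj_set0 W : proj set0 W = 0.
Proof. by apply/matrixP => i c; rewrite !mxE inE. Qed.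

Lemma row_proj_eq0 A W a : proj A W = 0 -> a \in A -> row a W = 0.
Proof. by move=> AW aA; rewrite -(row0 _ _ a) -AW row_proj aA. Qed.

Lemma proj_setC B W : proj B W + proj (~: B) W = W.
Proof. by apply/matrixP => i c; rewrite !mxE inE; case: (i \in B); rewrite ?addr0 ?add0r. Qed.

Lemma proj_sum A W : proj A W = \sum_(a in A) proj [set a] W.
Proof.
apply/matrixP => i c; rewrite summxE !mxE; under eq_bigr do rewrite mxE in_set1.
case: ifP => [iA | /negbT iA].
  rewrite (bigD1 i) //= eqxx big1 ?addr0 // => a /andP[_ ai].
  by rewrite eq_sym (negbTE ai).
by rewrite big1 // => a aA; case: eqP => // ia; rewrite ia aA in iA.
Qed.

End Projection.

Arguments proj0 {F m k} A.

Section Scheme.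
Variables (F : fieldType) (n s k : nat).
Local Notation m := n.+2.
Variables (len : 'I_m -> nat) (E : forall j : 'I_m, 'M[F]_(m * k, len j)).
Local Notation x := (codeword E (side s)).
Implicit Types (W : 'M[F]_(m, k)) (A B : {set 'I_m}) (a e i j p : 'I_m).

Definition silent W := forall e, x W e = 0.
Definition ignores e a := forall W, x (proj [set a] W) e = 0.
Definition ignores_one_side e B :=
  {in side s e :&: B, forall a, ignores e a} \/ {in side s e :\: B, forall a, ignores e a}.
Definition determined a := forall W, silent W -> row a W = 0.

Lemma codewordD W W' e : x (W + W') e = x W e + x W' e.
Proof. by rewrite /codeword projD linearD mulmxDl. Qed.

Lemma codeword0 e : x 0 e = 0.
Proof. by rewrite /codeword proj0 linear0 mul0mx. Qed.

Lemma codeword_proj_side W e : x (proj (side s e) W) e = x W e.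
Proof. by rewrite /codeword projI setIid. Qed.

Lemma codeword_ignored e A W : {in A, forall a, ignores e a} -> x (proj A W) e = 0.
Proof.
move=> ign; rewrite proj_sum.
apply: (big_ind (fun V => x V e = 0)) => [|V1 V2 V10 V20|a /ign //].
  exact: codeword0.
by rewrite codewordD V10 V20 addr0.
Qed.

Lemma silent_proj B W : (forall e, ignores_one_side e B) -> silent W -> silent (proj B W).
Proof.
move=> hB sW e; case: (hB e) => ign.
  by rewrite -codeword_proj_side projI codeword_ignored.
have outB : x (proj (~: B) W) e = 0.
  by rewrite -codeword_proj_side projI -setDE codeword_ignored.
by have := sW e; rewrite -{1}(proj_setC B W) codewordD outB addr0.
Qed.

Lemma ignores_one_side3 e y0 y1 y2 B : {subset side s e <= [:: y0; y1; y2]} ->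
  (y0 \in B) = (y1 \in B) \/ ignores e y0 -> (y1 \in B) = (y2 \in B) \/ ignores e y2 ->
  ignores_one_side e B.
Proof.
move=> win h01 h12.
have ign0 : (y0 \in B) != (y1 \in B) -> ignores e y0 by case: h01 => // ->; rewrite eqxx.
have ign2 : (y1 \in B) != (y2 \in B) -> ignores e y2 by case: h12 => // ->; rewrite eqxx.
case y1B: (y1 \in B); [right; move=> a; rewrite in_setD => /andP[aB /win]
                     | left; move=> a; rewrite in_setI => /andP[/win + aB]];
  rewrite !inE => /or3P[] /eqP aE; rewrite aE in aB *;
  by [apply: ign0; rewrite y1B ?(negbTE aB) ?aB | apply: ign2; rewrite y1B ?(negbTE aB) ?aB
     | rewrite y1B in aB].
Qed.

Variable d : 'I_m -> 'I_m.
Hypothesis d_out : forall j, d j \notin side s j.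
Hypothesis decodable :
  forall j W, silent W -> proj (side s j) W = 0 -> row (d j) W = 0.
Hypothesis secure : forall j i (v : 'rV[F]_k), i \notin side s j -> i != d j ->
  exists W, [/\ silent W, proj (side s j) W = 0 & row i W = v].
Hypothesis k_gt0 : (0 < k)%N.
Hypothesis s_gt0 : (0 < s)%N.
Hypothesis s_lt_m : (s < m)%N.

Definition decodes_next j := d j == j + s%:R.

Lemma mem_side_self j : j \in side s j.
Proof. by rewrite mem_side offset_self. Qed.

Lemma hidden_or_decoded j i :
  (forall W, silent W -> proj (side s j) W = 0 -> row i W = 0) -> i \in d j |: side s j.
Proof.
move=> vanish; rewrite in_setU1; apply/negPn/negP; rewrite negb_or => /andP[ij iA].
have [W [sW WA Wi]] := secure (const_mx 1) iA ij.
have := vanish W sW WA; rewrite Wi => /rowP/(_ (Ordinal k_gt0)).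
by rewrite !mxE => /eqP; rewrite oner_eq0.
Qed.

Lemma decoded_closure e j :
  side s e \subset d j |: side s j -> d e \in d j |: side s j.
Proof.
move=> sub; apply: hidden_or_decoded => W sW WA.
have WdA : proj (d j |: side s j) W = 0.
  rewrite -(proj0 (d j |: side s j)); apply: eq_proj => a.
  rewrite row0 in_setU1 => /predU1P[-> | aA]; first exact: decodable sW WA.
  exact: row_proj_eq0 WA aA.
by apply: decodable sW _; rewrite -(setIidPl sub) -projI WdA proj0.
Qed.

Lemma decoded_succ j : d j = j + s%:R -> d (j + 1) = j.
Proof.
move=> dj; have sub : side s (j + 1) \subset d j |: side s j.
  apply/subsetP => a; rewrite mem_side_succ // dj in_setU1.
  by move=> /andP[_ /orP[-> | ->]]; rewrite ?orbT.
have := decoded_closure sub; have := d_out (j + 1).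
rewrite dj mem_side_succ // in_setU1 => /negP out inA.
by apply/eqP/negPn/negP => ne; apply: out; rewrite ne orbC.
Qed.

Lemma decoded_pred j : d (j + 1) = j -> d j = j + s%:R.
Proof.
move=> dj1; have sub : side s j \subset d (j + 1) |: side s (j + 1).
  by apply/subsetP => a aA; rewrite dj1 in_setU1 mem_side_succ // aA; case: eqP.
have := decoded_closure sub; rewrite dj1 in_setU1 mem_side_succ // (negbTE (d_out j)).
by case/predU1P => [dj | /andP[_ /eqP //]]; have := d_out j; rewrite dj mem_side_self.
Qed.

Lemma ignores_of_secure e j i : i \notin side s j -> i != d j ->
  side s e \subset i |: side s j -> ignores e i.
Proof.
move=> iA id sub W; have [W' [sW' W'A W'i]] := secure (row i W) iA id.
rewrite -codeword_proj_side (_ : proj _ _ = proj (side s e) W') ?codeword_proj_side //.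
apply: eq_proj => a /(subsetP sub); rewrite row_proj in_set1 in_setU1.
case/predU1P => [-> | aA]; first by rewrite eqxx.
by rewrite (row_proj_eq0 W'A aA) ifN //; apply: contraNneq iA => <-.
Qed.

Lemma ignores_self e : ~~ decodes_next e -> ignores e e.
Proof.
move=> de; apply: (@ignores_of_secure e (e + 1)).
- by rewrite mem_side_succ // eqxx.
- by apply: contra de => /eqP de1; apply/eqP/decoded_pred; rewrite -de1.
- by apply/subsetP => a aA; rewrite in_setU1 mem_side_succ // aA; case: eqP.
Qed.

Lemma ignores_last e : ~~ decodes_next (e - 1) -> ignores e (e + s.-1%:R).
Proof.
move=> de; have -> : e + s.-1%:R = e - 1 + s%:R.
  by rewrite -[in RHS](prednK s_gt0) -natr1; ring.
rewrite -[in ignores e](subrK 1 e); apply: (@ignores_of_secure _ (e - 1)).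
- by rewrite mem_side offset_addr_natr // ltnn.
- by rewrite eq_sym.
- apply/subsetP => a; rewrite mem_side_succ // in_setU1.
  by move=> /andP[_ /orP[-> | ->]]; rewrite ?orbT.
Qed.

Lemma determined_proj j B : (forall e, ignores_one_side e B) ->
  [disjoint B & side s j] -> d j \in B -> determined (d j).
Proof.
move=> hB dis dB W sW; have := row_proj B W (d j); rewrite dB => <-.
apply: decodable (silent_proj hB sW) _.
by rewrite projI setIC (eqP (_ : B :&: side s j == set0)) ?setI_eq0 ?proj_set0.
Qed.

Lemma determined_decoded p i : determined p -> p \notin side s i -> d i = p.
Proof.
move=> dp pA; have := @hidden_or_decoded i p (fun W sW _ => dp W sW).
by rewrite in_setU1 (negbTE pA) orbF => /eqP.
Qed.

Lemma determined_unique p q : (2 * s < m)%N -> determined p -> determined q -> p = q.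
Proof.
move=> sm dp dq; have [i /andP[pA qA]] := side_avoiding2 p q sm.
by rewrite -(determined_decoded dp pA) (determined_decoded dq qA).
Qed.

Lemma not_all_determined : (2 * s < m)%N -> ~ (forall j, determined (d j)).
Proof.
move=> sm all_det; have := d_out (d 0).
by rewrite -(determined_unique sm (all_det 0) (all_det (d 0))) mem_side_self.
Qed.

Lemma decodes_next_succ j : (s.+1 < m)%N -> decodes_next j -> ~~ decodes_next (j + 1).
Proof.
move=> sm /eqP/decoded_succ; rewrite /decodes_next => ->.
by rewrite -addrA nat1r eq_sym addr_natr_eq.
Qed.

Lemma decoders_alternate : (s.+1 < m)%N ->
  (forall j, d j = j + s%:R \/ d j = j - 1) ->
  forall j, decodes_next (j + 1) = ~~ decodes_next j.
Proof.
move=> sm next_or_prev j; case dnj: (decodes_next j) => /=.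
  exact/negbTE/decodes_next_succ.
case: (next_or_prev (j + 1)) => [/eqP // | ].
by rewrite addrK => /decoded_pred/eqP; rewrite -/(decodes_next j) dnj.
Qed.

Lemma no_scheme_two_unknown : s.+2 = m -> odd m -> False.
Proof.
move=> sm odd_m; apply: (no_alternating_odd odd_m); apply: decoders_alternate => [|j].
  by rewrite sm.
have := d_out j; rewrite mem_side -leqNgt => dj; have dm := offset_lt j (d j).
rewrite -(addr_offset j (d j)) subr1_natr.
have [->|->] : offset j (d j) = s \/ offset j (d j) = n.+1 by lia.
  by left.
by right.
Qed.

Lemma ignores_one_side_small e B : s = 1%N \/ (s = 2 /\ 5 <= m)%N ->
  ignores_one_side e B.
Proof.
case=> [s1 | [s2 m5]].
  apply: (@ignores_one_side3 e e e e); [|by left..].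
  by move=> a; rewrite s1 => /side_window[[|t] // _ ->]; rewrite addr0 mem_head.
have win a : a \in side s e -> a = e \/ a = e + 1.
  by rewrite s2 => /side_window[[|[|t]] // _ ->]; [left; rewrite addr0 | right].
case: (boolP (decodes_next e)) => dn.
  have ign : ignores e (e + 1).
    have := @ignores_last e; rewrite s2; apply; apply/negP => /eqP.
    move=> /decoded_succ; rewrite subrK (eqP dn) subr1_natr => /eqP.
    by rewrite eq_addr_natr // => /eqP; lia.
  apply: (@ignores_one_side3 e (e + 1) e e); [|by right|by left].
  by move=> a /win[] ->; rewrite !inE eqxx ?orbT.
apply: (@ignores_one_side3 e e (e + 1) (e + 1)); [|by right; apply: ignores_self|by left].
by move=> a /win[] ->; rewrite !inE eqxx ?orbT.
Qed.

Lemma no_scheme_small_window : s = 1%N /\ (3 <= m)%N \/ s = 2 /\ (5 <= m)%N -> False.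
Proof.
move=> cases; apply: not_all_determined => [|j]; first by case: cases => -[-> ?]; lia.
apply: (@determined_proj j [set d j]) => [e||]; last by rewrite inE.
  by apply: ignores_one_side_small; case: cases => -[? ?]; [left | right].
by rewrite disjoints1 d_out.
Qed.

(* Only the windows starting at offsets b1 - 2, b1 - 1, b2 - 1 and b2 cross the
   boundary of the arc. *)
Lemma arc_ignores_one_side j b1 b2 : s = 3 -> (3 <= b1 <= b2)%N -> (b2 < m)%N ->
  ~~ decodes_next (j + (b1 - 1)%:R) -> ~~ decodes_next (j + b2%:R) ->
  ~~ decodes_next (j + (b1 - 3)%:R) -> ~~ decodes_next (j + (b2 - 2)%:R) ->
  forall e, ignores_one_side e (arc j b1 b2).
Proof.
move=> s3 hb b2m nd1 nd2 nd3 nd4 e; rewrite -(addr_offset j e).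
have := offset_lt j e; set o := offset j e => om.
apply: (@ignores_one_side3 _ (j + o%:R) (j + o.+1%:R) (j + o.+2%:R)).
- move=> a /side_window[t]; rewrite s3 -addrA -natrD.
  by case: t => [|[|[|t]]] // _ ->; rewrite ?addn0 ?addn1 ?addn2 !inE eqxx ?orbT.
- have [ob | ob] := boolP ((o == b1 - 1) || (o == b2))%N.
    by right; apply: ignores_self; case/orP: ob => /eqP ->.
  by left; rewrite !mem_arc_natr //; lia.
- have [ob | ob] := boolP ((o == b1 - 2) || (o == b2 - 1))%N.
    right; rewrite -[o.+2]addn2 natrD addrA.
    have := @ignores_last (j + o%:R); rewrite s3; apply.
    have -> : j + o%:R - 1 = j + (o - 1)%:R.
      by rewrite -[in LHS](@subnK 1 o) ?natrD; [ring | lia].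
    by case/orP: ob => /eqP ->; rewrite -subnDA.
  by left; rewrite !mem_arc_natr //; lia.
Qed.

Lemma interior_determined j : s = 3 -> (7 <= m)%N ->
  ~~ decodes_next j -> d j != j - 1 -> determined (d j).
Proof.
move=> s3 m7 ndj dj.
have nn e : decodes_next e -> ~~ decodes_next (e + 1).
  by apply: decodes_next_succ; rewrite s3; lia.
have [b1 hb1 [nd1 nd3]] : exists2 b1, (3 <= b1 <= 4)%N &
    ~~ decodes_next (j + (b1 - 1)%:R) /\ ~~ decodes_next (j + (b1 - 3)%:R).
  case: (boolP (decodes_next (j + 2%:R))) => h; last by exists 3%N; rewrite ?addr0.
  exists 4%N => //; split; first by have := nn _ h; rewrite -addrA natr1.
  by apply: contraL h => /nn; rewrite -addrA natr1.
have [b2 hb2 [nd2 nd4]] : exists2 b2, (m - 2 <= b2 < m)%N &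
    ~~ decodes_next (j + b2%:R) /\ ~~ decodes_next (j + (b2 - 2)%:R).
  case: (boolP (decodes_next (j + (m - 3)%:R))) => h.
    exists (m - 3).+1; first lia.
    split; first by have := nn _ h; rewrite -addrA natr1.
    by apply: contraL h => /nn; rewrite -addrA natr1 (_ : ((m - 3).+1 - 2).+1 = m - 3)%N //; lia.
  exists n.+1; first lia.
  split; last by rewrite (_ : n.+1 - 2 = m - 3)%N //; lia.
  by apply: contra dj => /eqP/decoded_succ; rewrite -subr1_natr subrK => ->.
apply: (@determined_proj j (arc j b1 b2)).
- by apply: arc_ignores_one_side => //; lia.
- rewrite disjoint_sym disjoint_subset; apply/subsetP => a.
  by rewrite mem_side s3 !inE; lia.
have d3 : offset j (d j) != 3%N.
  by apply: contra ndj => /eqP d3; rewrite /decodes_next -{1}(addr_offset j (d j)) d3 s3.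
have dm : offset j (d j) != n.+1.
  by apply: contra dj => /eqP dm; rewrite -{1}(addr_offset j (d j)) dm subr1_natr.
rewrite inE; have := d_out j; rewrite mem_side s3; have := offset_lt j (d j); lia.
Qed.

Lemma no_scheme_window3 : s = 3 -> (7 <= m)%N -> odd m -> False.
Proof.
move=> s3 m7 odd_m.
have [j ndj dj] : exists2 j, ~~ decodes_next j & d j != j - 1.
  have [/existsP[j /andP[]] | /existsPn next_or_prev] :=
    boolP [exists j, ~~ decodes_next j && (d j != j - 1)]; first by exists j.
  exfalso; apply: (no_alternating_odd odd_m); apply: decoders_alternate => [|e].
    by rewrite s3; lia.
  by have := next_or_prev e; rewrite negb_and !negbK => /orP[] /eqP; [left | right].
set p := d j; have det_p : determined p := interior_determined s3 m7 ndj dj.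
set q := p - s%:R; have pq : p = q + s%:R by rewrite subrK.
have dp : d p = p + s%:R.
  apply/decoded_pred/(determined_decoded det_p).
  by rewrite mem_side_succ // eqxx.
have dq1 : d (q + 1) = q.
  apply/decoded_succ; rewrite -pq; apply: (determined_decoded det_p).
  by rewrite pq mem_side offset_addr_natr // ltnn.
set u := p - 1; have up : p = u + 1 by rewrite subrK.
have ndu : ~~ decodes_next u.
  apply/negP => /eqP/decoded_succ; rewrite -up dp => /eqP.
  by rewrite /u subr1_natr eq_addr_natr //; lia.
have du : d u != u - 1.
  have uq : u = q + 1 + 1 by rewrite /u pq s3; ring.
  apply/negP => /eqP; rewrite {2}uq addrK uq => /decoded_pred.
  by rewrite dq1 => /eqP; rewrite eq_sym -addrA nat1r addr_natr_eq //; lia.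
have := d_out u; have det_u := interior_determined s3 m7 ndu du.
rewrite (determined_unique _ det_u det_p) ?s3 // up -[u + 1]/(u + 1%:R).
by rewrite mem_side offset_addr_natr ?s3.
Qed.

Lemma no_secure_scheme :
  [\/ s = 1%N /\ (3 <= m)%N, s = 2 /\ (5 <= m)%N, s = 3 /\ odd m | s = (m - 2)%N /\ odd m] ->
  False.
Proof.
case=> [[s1 m3] | [s2 m5] | [s3 odd_m] | [sm odd_m]].
- by apply: no_scheme_small_window; left.
- by apply: no_scheme_small_window; right.
- have n2 : n != 2 by apply: contraTneq odd_m => ->.
  have n4 : n != 4 by apply: contraTneq odd_m => ->.
  have [m5 | m7] : m = 5%N \/ (7 <= m)%N by lia.
    by apply: no_scheme_two_unknown; rewrite ?s3 ?m5.
  exact: no_scheme_window3.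
- by apply: no_scheme_two_unknown; rewrite ?sm; lia.
Qed.

End Scheme.

Lemma feasible_linear_silent (F : finFieldType) n s k : feasible_linear F n.+2 s k ->
  exists len (E : forall j : 'I_n.+2, 'M[F]_(n.+2 * k, len j)) d,
  [/\ forall j, d j \notin side s j,
      forall j W, silent s E W -> proj (side s j) W = 0 -> row (d j) W = 0
    & forall j i v, i \notin side s j -> i != d j ->
        exists W, [/\ silent s E W, proj (side s j) W = 0 & row i W = v]].
Proof.
move=> [len [E [d [DEC [d_out [dec sec]]]]]]; exists len, E, d; split => //.
  move=> j W sW WA; have xW : codeword E (side s) W = codeword E (side s) 0.
    by apply: functional_extensionality_dep => e; rewrite sW codeword0.
  by rewrite -dec WA xW; have := dec j 0; rewrite proj0 row0.
(* The count with W0 = 0 and y = x 0 is positive on the right (W = 0), hence on the left. *)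
move=> j i v iA id; have := sec j i iA id 0 v (codeword E (side s) 0).
set S1 := [set _ | _]; set S2 := [set _ | _] => card_S.
have : (0 < #|S2|)%N by apply/card_gt0P; exists 0; rewrite inE eqxx; apply/forallP.
rewrite -card_S muln_gt0 => /andP[/card_gt0P[W] + _].
rewrite inE proj0 => /andP[/andP[/eqP WA /eqP Wi] /forallP xW].
by exists W; split=> // e; rewrite (eqP (xW e)) codeword0.
Qed.

Theorem theorem1 (F : finFieldType) (m s k : nat) :
  (2 <= m)%N -> (1 <= s <= m - 1)%N -> (0 < k)%N ->
  [\/ s = 1%N /\ (3 <= m)%N,
      s = 2%N /\ (5 <= m)%N,
      s = 3%N /\ odd m
    | s = (m - 2)%N /\ odd m] ->
  ~ feasible_linear F m s k.
Proof.
case: m => [|[|n]] // _ hs k_gt0 cases.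
move=> /feasible_linear_silent[len [E [d [d_out dec sec]]]].
by apply: (no_secure_scheme d_out dec sec k_gt0) cases; lia.
Qed.
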